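(* Let $\ell\ge2$ and $n\ge1$ be integers with $\gcd(n,\ell)=1$. Then each switching equivalence class in $\mathrm{Alt}_n(\mathbb{Z}/\ell\mathbb{Z})$ contains exactly one isomorphism class of modular Eulerian matrices; that is, every $M\in\mathrm{Alt}_n(\mathbb{Z}/\ell\mathbb{Z})$ is switching equivalent to some modular Eulerian matrix, and any two modular Eulerian matrices that are switching equivalent are isomorphic.
   Context: $\mathrm{Alt}_n(\mathbb{Z}/\ell\mathbb{Z})$ is the set of $n\times n$ matrices $M=(m_{ij})$ over $\mathbb{Z}/\ell\mathbb{Z}$ with $m_{ii}=0$ and $m_{ij}+m_{ji}=0$. For $v\in[n]$ let $X_v$ be the matrix with $(X_v)_{iv}=1$ and $(X_v)_{vi}=-1$ for all $i\ne v$ and all other entries $0$; the switching at $v$ is $\mu_v(M)=M+X_v$. $M\cong M'$ means there is $\sigma\in\mathfrak{S}_n$ with $m'_{\sigma(i)\sigma(j)}=m_{ij}$ for all $i,j$. $M,M'$ are switching equivalent if there are positive integers $i_1,\dots,i_n$ with $M'\cong\mu_1^{i_1}\cdots\mu_n^{i_n}(M)$. $M\in\mathrm{Alt}_n(\mathbb{Z}/\ell\mathbb{Z})$ is a modular Eulerian matrix if $\sum_{j=1}^n m_{ij}=0$ in $\mathbb{Z}/\ell\mathbb{Z}$ for every $i$. *)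

From mathcomp Require Import all_boot all_order all_algebra perm.
Set Implicit Arguments. Unset Strict Implicit. Unset Printing Implicit Defensive.
Import GRing.Theory.
Local Open Scope ring_scope.

Definition is_alt (R : zmodType) (n : nat) (M : 'M[R]_n) : Prop :=
  (forall i, M i i = 0) /\ (forall i j, M i j + M j i = 0).

Definition Xsw (R : nzRingType) (n : nat) (v : 'I_n) : 'M[R]_n :=
  \matrix_(i, j) (if i == j then 0
                  else if j == v then 1
                  else if i == v then -1 else 0).

Definition mu (R : nzRingType) (n : nat) (v : 'I_n) (M : 'M[R]_n) : 'M[R]_n :=
  M + Xsw R v.

(* mu_1^{i_1} ... mu_n^{i_n} (M) : apply mu_n^{i_n} first, ..., mu_1^{i_1} last *)
Definition multi_switch (R : nzRingType) (n : nat) (e : 'I_n -> nat)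
    (M : 'M[R]_n) : 'M[R]_n :=
  foldr (fun v A => iter (e v) (mu v) A) M (enum 'I_n).

Definition mx_iso (R : Type) (n : nat) (M M' : 'M[R]_n) : Prop :=
  exists s : {perm 'I_n}, forall i j, M' (s i) (s j) = M i j.

Definition switching_equiv (R : nzRingType) (n : nat) (M M' : 'M[R]_n) : Prop :=
  exists e : 'I_n -> nat, (forall v, (0 < e v)%N) /\ mx_iso (multi_switch e M) M'.

Definition modular_eulerian (R : zmodType) (n : nat) (M : 'M[R]_n) : Prop :=
  is_alt M /\ (forall i, \sum_j M i j = 0).

(* Switching at every v with multiplicities e v adds to M the matrix with entries
   c j - c i, where c v = (e v)%:R.  Since n is invertible mod ell, choosing
   c i = (row sum i of M) / n kills every row sum, the total sum of the entries of an
   alternating matrix being 0.  Conversely, if M and M + (c j - c i) are both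
   Eulerian then n c i = sum_j c j for every i, so c is constant and the switching
   matrix vanishes; the remaining permutation is the isomorphism. *)
From mathcomp Require Import all_boot all_order all_algebra perm.
Set Implicit Arguments. Unset Strict Implicit. Unset Printing Implicit Defensive.
Import GRing.Theory.
Local Open Scope ring_scope.

Definition switch_mx (R : zmodType) (n : nat) (c : 'I_n -> R) : 'M[R]_n :=
  \matrix_(i, j) (c j - c i).

Section SwitchingAsSwitchMx.
Variables (R : nzRingType) (n : nat).
Implicit Types (M : 'M[R]_n) (e : 'I_n -> nat).

Lemma XswE (v i j : 'I_n) : Xsw R v i j = (j == v)%:R - (i == v)%:R.
Proof.
rewrite mxE; have [->|neq_ij] := eqVneq i j; first by rewrite subrr.
have [<-|_] := eqVneq j v; first by rewrite (negbTE neq_ij) subr0.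
by have [_|_] := eqVneq i v; rewrite /= ?sub0r ?subrr ?oppr0.
Qed.

Lemma sum_Xsw_muln e : \sum_v Xsw R v *+ e v = switch_mx (fun v => (e v)%:R).
Proof.
have sum_delta j : \sum_v ((j == v)%:R : R) *+ e v = (e j)%:R.
  rewrite (bigD1 j) //= eqxx big1 ?addr0 // => v neq_vj.
  by rewrite eq_sym (negbTE neq_vj) mul0rn.
apply/matrixP => i j; rewrite summxE mxE.
under eq_bigr do rewrite mulmxnE XswE mulrnBl.
by rewrite sumrB !sum_delta.
Qed.

Lemma iter_mu k (v : 'I_n) M : iter k (mu v) M = M + Xsw R v *+ k.
Proof.
elim: k => [|k IH] /=; first by rewrite addr0.
by rewrite IH /mu mulrS -addrA [Xsw R v + _]addrC.
Qed.

Lemma multi_switchE e M : multi_switch e M = M + switch_mx (fun v => (e v)%:R).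
Proof.
rewrite /multi_switch -sum_Xsw_muln -big_enum /=.
elim: (enum 'I_n) => [|v s IH] /=; first by rewrite big_nil addr0.
by rewrite iter_mu IH big_cons -addrA [Xsw R v *+ _ + _]addrC.
Qed.

Lemma switching_equiv_switch_mx M M' :
  switching_equiv M M' -> exists c, mx_iso (M + switch_mx c) M'.
Proof. by case=> e [_]; rewrite multi_switchE; exists (fun v => (e v)%:R). Qed.

End SwitchingAsSwitchMx.

Lemma Zp_natr_pos (ell : nat) (x : 'Z_ell) :
  (1 < ell)%N -> exists2 k, (0 < k)%N & k%:R = x.
Proof.
move=> ell_gt1; exists (val x + ell)%N; first by rewrite addn_gt0 (ltnW ell_gt1) orbT.
by rewrite natrD pchar_Zp // addr0 natr_Zp.
Qed.

Lemma switching_equiv_add_switch_mx (ell n : nat) (M : 'M['Z_ell]_n) c :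
  (1 < ell)%N -> switching_equiv M (M + switch_mx c).
Proof.
move=> ell_gt1; have /fin_all_exists2[e e_gt0 eE] v := Zp_natr_pos (c v) ell_gt1.
exists e; split=> //; rewrite multi_switchE.
by exists 1%g => i j; rewrite !perm1 !mxE !eE.
Qed.

Lemma mx_iso_row_sums_eq0 (R : zmodType) (n : nat) (M M' : 'M[R]_n) :
  mx_iso M M' -> (forall i, \sum_j M' i j = 0) -> forall i, \sum_j M i j = 0.
Proof.
case=> s M'_s M'_rows i; rewrite -[RHS](M'_rows (s i)) [RHS](reindex_inj (@perm_inj _ s)).
by apply: eq_bigr => j _; rewrite M'_s.
Qed.

Section ZmodSwitch.
Variables (R : zmodType) (n : nat).
Implicit Types (M : 'M[R]_n) (c : 'I_n -> R).

Lemma row_sum_switch_mx c i : \sum_j switch_mx c i j = \sum_j c j - c i *+ n.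
Proof.
under eq_bigr do rewrite mxE.
by rewrite sumrB sumr_const card_ord.
Qed.

Lemma is_alt_add_switch_mx M c : is_alt M -> is_alt (M + switch_mx c).
Proof.
case=> M_diag M_anti; split=> [i|i j]; rewrite !mxE.
  by rewrite M_diag subrr addr0.
by rewrite addrACA M_anti add0r addrC subrKA subrr.
Qed.

(* Splitting along the diagonal rather than adding M to its transpose, which would
   only give twice the total sum and fails in characteristic 2. *)
Lemma alt_sum_eq0 M : is_alt M -> \sum_i \sum_j M i j = 0.
Proof.
case=> M_diag M_anti.
pose lower i j := M i j *+ (j < i)%N.
have M_split i j : M i j = lower i j - lower j i.
  rewrite /lower; case: ltngtP => [_|_|/val_inj->]; rewrite ?mulr0n ?mulr1n.
  - by rewrite subr0.
  - by apply/eqP; rewrite sub0r -addr_eq0 M_anti.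
  - by rewrite M_diag subr0.
under eq_bigr do under eq_bigr do rewrite M_split.
under eq_bigr do rewrite sumrB.
by rewrite sumrB exchange_big subrr.
Qed.

End ZmodSwitch.

Section UnitRingSwitch.
Variables (R : unitRingType) (n : nat).
Hypothesis n_unit : (n%:R : R) \is a GRing.unit.
Implicit Types (M : 'M[R]_n) (c : 'I_n -> R).

Lemma eulerian_add_switch_mx M :
  is_alt M -> modular_eulerian (M + switch_mx (fun i => (\sum_j M i j) / n%:R)).
Proof.
move=> M_alt; split; first exact: is_alt_add_switch_mx.
move=> i; under eq_bigr do rewrite mxE.
rewrite big_split /= row_sum_switch_mx -mulr_suml alt_sum_eq0 // mul0r sub0r.
by rewrite -[_ *+ n]mulr_natr mulrVK // subrr.
Qed.

Lemma switch_mx_eq0 c : (forall i, \sum_j switch_mx c i j = 0) -> switch_mx c = 0.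
Proof.
move=> rows0; have c_const i j : c i = c j.
  apply: (mulIr n_unit); rewrite !mulr_natr.
  move: (rows0 i) (rows0 j); rewrite !row_sum_switch_mx.
  by move=> /eqP; rewrite subr_eq0 => /eqP <- /eqP; rewrite subr_eq0 => /eqP.
by apply/matrixP => i j; rewrite !mxE (c_const j i) subrr.
Qed.

End UnitRingSwitch.

Theorem theorem4p4 (ell n : nat) (hl : (1 < ell)%N) (hn : (0 < n)%N)
    (hcop : coprime n ell) :
  (forall M : 'M['Z_ell]_n, is_alt M ->
     exists M' : 'M['Z_ell]_n, modular_eulerian M' /\ switching_equiv M M') /\
  (forall M M' : 'M['Z_ell]_n, modular_eulerian M -> modular_eulerian M' ->
     switching_equiv M M' -> mx_iso M M').
Proof.
have n_unit : (n%:R : 'Z_ell) \is a GRing.unit by rewrite unitZpE // coprime_sym.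
split=> [M M_alt | M M' [_ M_rows] [_ M'_rows] /switching_equiv_switch_mx[c M_c_iso]].
  exists (M + switch_mx (fun i => (\sum_j M i j) / n%:R)); split.
    exact: eulerian_add_switch_mx.
  exact: switching_equiv_add_switch_mx.
have switch_rows i : \sum_j switch_mx c i j = 0.
  have := mx_iso_row_sums_eq0 M_c_iso M'_rows i.
  by under eq_bigr do rewrite mxE; rewrite big_split /= M_rows add0r.
by move: M_c_iso; rewrite (switch_mx_eq0 n_unit switch_rows) addr0.
Qed.
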